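(* Let $\lambda>1$ and let $f:\mathbb Q\to\mathbb C$ have property $\mathscr S(\lambda)$. Then for every $x\in\mathfrak S\setminus\mathbb Q$, the limit $$f^\ast(x):=\lim_{y\in\mathbb Q\cap\mathfrak T(B),\ y\to x}f(y)$$ exists for every $B>0$ such that $x\in\mathfrak T(B)\setminus\mathbb Q$. Moreover, set $f^\ast(x):=f(x)$ for $x\in\mathbb Q$. Then for $m\in\mathbb N$ and $B>0$ with $m\geq B^{1/\lambda}$, uniformly in $x,x'\in\mathfrak T(B)$ satisfying $r(x),r(x')\geq m$ and $b_j(x)=b_j(x')$ for all $j\leq m$, one has $$f^\ast(x)-f^\ast(x')=o(1)\qquad(m\to\infty),$$ where the rate of decay may depend on $\lambda$ (and $f$) but not on $B$.
   Context: For $x\in\mathbb R$ write $x=[b_0(x);b_1(x),b_2(x),\dots]$ (regular continued fraction); $r(x)$ is the length of the (minimal) expansion for rational $x$ and $r(x)=\infty$ for irrational $x$. For $B>0$, $\mathfrak T(B):=\{x\in\mathbb R\colon b_j(x)\leq\max(B,j(\log j)^2)\text{ for all }1\leq j\leq r(x)\}$, and $\mathfrak S:=\bigcup_{B>0}\mathfrak T(B)$. For $B>0$, integer $m\ge1$ and $x\in\mathfrak T(B)$, $V(B,m,x):=\{x'\in\mathbb Q\cap\mathfrak T(B)\colon r(x')\geq m,\ b_j(x')=b_j(x)\ \forall j\leq m\}$. A function $f:\mathbb Q\to\mathbb C$ has property $\mathscr S(\lambda)$ if $\Delta_\lambda(m):=\sup_{x\in\mathfrak T(m^\lambda)}\sup_{x',x''\in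 V(m^\lambda,m,x)}|f(x')-f(x'')|\to0$ as $m\to\infty$. *)

From Stdlib Require Import Reals QArith Qcanon Qreals.
From Coquelicot Require Import Complex.
Open Scope R_scope.

Definition Qc2R (q : Qc) : R := Q2R (this q).

Definition is_rational (x : R) : Prop := exists q : Qc, Qc2R q = x.

(* Complete quotients of the regular continued fraction algorithm:
   x_0 = x, x_{n+1} = 1 / (x_n - floor x_n) provided x_n is not an integer.
   [cf_quot n x = None] iff the expansion stops before index n (i.e. r(x) < n).
   For rational x this yields the minimal expansion (last partial quotient >= 2
   when r(x) >= 1). *)
Fixpoint cf_quot (n : nat) (x : R) : option R :=
  match n with
  | O => Some x
  | S n' =>
      match cf_quot n' x with
      | None => None
      | Some y => if Req_EM_T (frac_part y) 0 then None else Some (/ frac_part y)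
      end
  end.

(* b_j(x) (Int_part = floor), defined iff j <= r(x). *)
Definition cf_digit (j : nat) (x : R) : option Z :=
  match cf_quot j x with
  | None => None
  | Some y => Some (Int_part y)
  end.

(* r(x) >= m  (r(x) = infinity for irrational x) *)
Definition r_ge (m : nat) (x : R) : Prop := cf_quot m x <> None.

Definition in_T (B : R) (x : R) : Prop :=
  forall (j : nat) (b : Z), (1 <= j)%nat -> cf_digit j x = Some b ->
    IZR b <= Rmax B (INR j * (ln (INR j)) ^ 2).

Definition in_S (x : R) : Prop := exists B, 0 < B /\ in_T B x.

(* x' \in V(B, m, x)  (x' rational is imposed where used) *)
Definition in_V (B : R) (m : nat) (x x' : R) : Prop :=
  in_T B x' /\ r_ge m x' /\ (forall j, (j <= m)%nat -> cf_digit j x' = cf_digit j x).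

(* Property S(lambda): Delta_lambda(m) -> 0, i.e. for every eps > 0, for all
   large m, sup_{x in T(m^lam)} sup_{x',x'' in V(m^lam,m,x)} |f x' - f x''| <= eps. *)
Definition prop_S (lam : R) (f : Qc -> C) : Prop :=
  forall eps, 0 < eps -> exists M : nat, forall m : nat, (M <= m)%nat -> (1 <= m)%nat ->
    forall x : R, in_T (Rpower (INR m) lam) x ->
    forall q1 q2 : Qc,
      in_V (Rpower (INR m) lam) m x (Qc2R q1) ->
      in_V (Rpower (INR m) lam) m x (Qc2R q2) ->
      Cmod (Cminus (f q1) (f q2)) <= eps.

Definition cf_limit (B : R) (f : Qc -> C) (x : R) (L : C) : Prop :=
  forall eps, 0 < eps -> exists delta, 0 < delta /\
    forall q : Qc, in_T B (Qc2R q) -> 0 < Rabs (Qc2R q - x) < delta ->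
      Cmod (Cminus (f q) L) < eps.

From Stdlib Require Import Reals QArith Qcanon Qreals Lra Lia ClassicalEpsilon Classical.
From Coquelicot Require Import Coquelicot.
Open Scope R_scope.

(* For irrational x, the rationals [b_0(x); b_1(x), ..., b_(d-1)(x), 2] with d >= 3 share the
   partial quotients b_0, ..., b_(d-1) of x and lie in T(B) whenever x does: the appended partial
   quotient 2 sits at an index j >= 3, where 2 <= j (log j)^2. Property S(lambda), used at any m with
   B <= m^lambda, makes f Cauchy along these rationals, and f^*(x) is the limit. The complete quotients
   of x depend continuously on x, so every rational close to x shares its first m partial quotients,
   which with S(lambda) gives the punctured limit. Since m >= B^(1/lambda) means B <= m^lambda, the
   uniform estimate is S(lambda) again, after replacing f^*(x) and f^*(x') by values of f at rationals
   of V(B, m, x). *)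

Lemma Int_part_IZR_add (a : Z) (s : R) : 0 <= s < 1 ->
  Int_part (IZR a + s) = a /\ frac_part (IZR a + s) = s.
Proof.
  intros Hs. destruct (Int_part_frac_part_spec (IZR a + s) a s Hs eq_refl) as [Ha Hf].
  split; symmetry; assumption.
Qed.

Lemma Int_part_IZR (a : Z) : Int_part (IZR a) = a /\ frac_part (IZR a) = 0.
Proof. rewrite <- (Rplus_0_r (IZR a)). apply Int_part_IZR_add. lra. Qed.

Lemma frac_part_inv_gt_1 (y : R) : frac_part y <> 0 -> 1 < / frac_part y.
Proof.
  intros Hy. destruct (base_fp y) as [H0 H1].
  rewrite <- Rinv_1. apply Rinv_lt_contravar; [|exact H1].
  assert (0 < frac_part y) by (destruct H0; [assumption|congruence]). lra.
Qed.

Lemma Int_part_ge_1 (y : R) : 1 <= y -> (1 <= Int_part y)%Z.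
Proof.
  intros Hy. destruct (base_Int_part y) as [_ H].
  apply Z.lt_pred_le, lt_IZR. simpl. lra.
Qed.

Lemma locally_Int_part (w : R) : frac_part w <> 0 ->
  locally w (fun y => Int_part y = Int_part w /\ frac_part y <> 0).
Proof.
  intros Hw. destruct (base_fp w) as [H0 H1].
  assert (Hpos : 0 < frac_part w) by (destruct H0; [assumption|congruence]).
  assert (Hd : 0 < Rmin (frac_part w) (1 - frac_part w)) by (apply Rmin_pos; lra).
  exists (mkposreal _ Hd). intros y Hy.
  change (Rabs (y - w) < Rmin (frac_part w) (1 - frac_part w)) in Hy.
  apply Rabs_def2 in Hy.
  pose proof (Rmin_l (frac_part w) (1 - frac_part w)).
  pose proof (Rmin_r (frac_part w) (1 - frac_part w)).
  pose proof (Rplus_Int_part_frac_part w).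
  assert (E : Int_part y = Int_part w) by (symmetry; apply Int_part_spec; lra).
  split; [exact E|]. unfold frac_part at 1. rewrite E. apply Rgt_not_eq. lra.
Qed.

Lemma locally_R_delta (x : R) (P : R -> Prop) : locally x P ->
  exists delta, 0 < delta /\ forall y, Rabs (y - x) < delta -> P y.
Proof. intros [delta H]. exists delta. split; [apply cond_pos|exact H]. Qed.

Lemma continuous_inv_frac_part (x : R) : frac_part x <> 0 ->
  continuous (fun y => / frac_part y) x.
Proof.
  intros Hx. apply continuous_ext_loc with (fun y => / (y - IZR (Int_part x))).
  - eapply filter_imp; [|exact (locally_Int_part x Hx)].
    intros y [E _]. unfold frac_part. rewrite E. reflexivity.
  - apply (ex_derive_continuous (K := R_AbsRing) (V := R_NormedModule)).
    auto_derive. exact Hx.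
Qed.

Fixpoint cquot (n : nat) (y : R) : R :=
  match n with O => y | S n => cquot n (/ frac_part y) end.

Lemma cquot_S (n : nat) (y : R) : cquot (S n) y = / frac_part (cquot n y).
Proof. revert y. induction n as [|n IH]; intros y; [reflexivity|]. exact (IH (/ frac_part y)). Qed.

Definition cf_infinite (x : R) : Prop := forall k, frac_part (cquot k x) <> 0.

Lemma continuous_cquot (n : nat) (x : R) : cf_infinite x -> continuous (cquot n) x.
Proof.
  revert x. induction n as [|n IH]; intros x Hx.
  - apply continuous_id.
  - apply (continuous_comp (fun y => / frac_part y) (cquot n)).
    + exact (continuous_inv_frac_part x (Hx O)).
    + apply IH. intros k. exact (Hx (S k)).
Qed.

Lemma locally_cquot_prefix (m : nat) (x : R) : cf_infinite x ->
  locally x (fun y => forall j, (j <= m)%nat ->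
    Int_part (cquot j y) = Int_part (cquot j x) /\ frac_part (cquot j y) <> 0).
Proof.
  intros Hx.
  assert (Hj : forall j, locally x (fun y =>
    Int_part (cquot j y) = Int_part (cquot j x) /\ frac_part (cquot j y) <> 0)).
  { intros j. apply (continuous_cquot j x Hx (fun w =>
      Int_part w = Int_part (cquot j x) /\ frac_part w <> 0)).
    apply locally_Int_part, Hx. }
  induction m as [|m IH].
  - eapply filter_imp; [|exact (Hj O)]. intros y H j Hle.
    replace j with O by lia. exact H.
  - eapply filter_imp; [|exact (filter_and _ _ IH (Hj (S m)))]. intros y [H1 H2] j Hle.
    destruct (Nat.eq_dec j (S m)) as [->|Hne]; [exact H2|apply H1; lia].
Qed.

Lemma cf_quot_Some (n : nat) (y : R) :
  (forall i, (i < n)%nat -> frac_part (cquot i y) <> 0) -> cf_quot n y = Some (cquot n y).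
Proof.
  induction n as [|n IH]; intros H; [reflexivity|]. cbn [cf_quot].
  rewrite IH by (intros i Hi; apply H; lia).
  destruct (Req_EM_T (frac_part (cquot n y)) 0) as [E|_].
  - exfalso. exact (H n (Nat.lt_succ_diag_r n) E).
  - rewrite cquot_S. reflexivity.
Qed.

Lemma cf_quot_Some_inv (n : nat) (y w : R) : cf_quot n y = Some w ->
  w = cquot n y /\ forall i, (i < n)%nat -> frac_part (cquot i y) <> 0.
Proof.
  revert w. induction n as [|n IH]; intros w H; cbn [cf_quot] in H.
  - injection H as <-. split; [reflexivity|]. intros i Hi. lia.
  - destruct (cf_quot n y) as [v|]; [|discriminate].
    destruct (IH v eq_refl) as [-> Hpre].
    destruct (Req_EM_T (frac_part (cquot n y)) 0) as [_|Hn]; [discriminate|].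
    injection H as <-. split; [symmetry; apply cquot_S|].
    intros i Hi. destruct (Nat.eq_dec i n) as [->|Hne]; [exact Hn|apply Hpre; lia].
Qed.

Lemma cf_digit_Some (j : nat) (y : R) :
  (forall i, (i < j)%nat -> frac_part (cquot i y) <> 0) -> cf_digit j y = Some (Int_part (cquot j y)).
Proof. intros H. unfold cf_digit. rewrite cf_quot_Some by exact H. reflexivity. Qed.

Lemma r_ge_intro (m : nat) (y : R) :
  (forall i, (i < m)%nat -> frac_part (cquot i y) <> 0) -> r_ge m y.
Proof. intros H. unfold r_ge. rewrite cf_quot_Some by exact H. discriminate. Qed.

Lemma locally_cf_prefix (m : nat) (x : R) : cf_infinite x ->
  locally x (fun y => r_ge m y /\ forall j, (j <= m)%nat -> cf_digit j y = cf_digit j x).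
Proof.
  intros Hx. eapply filter_imp; [|exact (locally_cquot_prefix m x Hx)]. intros y H.
  assert (Hy : forall i, (i < m)%nat -> frac_part (cquot i y) <> 0) by (intros i Hi; apply H; lia).
  split; [exact (r_ge_intro m y Hy)|].
  intros j Hj. rewrite (cf_digit_Some j x (fun i _ => Hx i)).
  rewrite cf_digit_Some by (intros i Hi; apply Hy; lia).
  f_equal. apply H, Hj.
Qed.

Lemma cquot_gt_1 (x : R) (k : nat) : cf_infinite x -> (1 <= k)%nat -> 1 < cquot k x.
Proof.
  intros Hx Hk. destruct k as [|k]; [lia|]. rewrite cquot_S. apply frac_part_inv_gt_1, Hx.
Qed.

Fixpoint cf_splice (x : R) (k d : nat) (z : R) : R :=
  match d with
  | O => z
  | S d => IZR (Int_part (cquot k x)) + / cf_splice x (S k) d z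
  end.

Section Splice.

Variables (x z : R).
Hypothesis x_inf : cf_infinite x.
Hypothesis z_gt_1 : 1 < z.

Lemma cf_splice_gt_1 (d k : nat) : (1 <= k)%nat -> 1 < cf_splice x k d z.
Proof.
  revert k. induction d as [|d IH]; intros k Hk; [exact z_gt_1|]. cbn [cf_splice].
  pose proof (IZR_le _ _ (Int_part_ge_1 _ (Rlt_le _ _ (cquot_gt_1 x k x_inf Hk)))).
  pose proof (Rinv_0_lt_compat _ (Rlt_trans _ _ _ Rlt_0_1 (IH (S k) ltac:(lia)))).
  lra.
Qed.

Lemma cf_splice_step (d k : nat) :
  Int_part (cf_splice x k (S d) z) = Int_part (cquot k x) /\
  frac_part (cf_splice x k (S d) z) = / cf_splice x (S k) d z.
Proof.
  apply Int_part_IZR_add.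
  pose proof (cf_splice_gt_1 d (S k) ltac:(lia)).
  split; [apply Rlt_le, Rinv_0_lt_compat; lra|].
  rewrite <- Rinv_1. apply Rinv_lt_contravar; lra.
Qed.

Lemma cquot_cf_splice (d k i : nat) : (i <= d)%nat ->
  cquot i (cf_splice x k d z) = cf_splice x (k + i) (d - i) z.
Proof.
  revert d k. induction i as [|i IH]; intros d k Hi.
  - rewrite Nat.add_0_r, Nat.sub_0_r. reflexivity.
  - destruct d as [|d]; [lia|]. cbn [cquot].
    rewrite (proj2 (cf_splice_step d k)), Rinv_inv, IH by lia.
    f_equal. lia.
Qed.

End Splice.

Definition cf_approx (x : R) (d : nat) : R := cf_splice x 0 d 2.

Lemma cf_approx_cquot_lt (x : R) (d j : nat) : cf_infinite x -> (j < d)%nat ->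
  Int_part (cquot j (cf_approx x d)) = Int_part (cquot j x) /\
  frac_part (cquot j (cf_approx x d)) <> 0.
Proof.
  intros Hx Hj. unfold cf_approx. rewrite (cquot_cf_splice x 2 Hx ltac:(lra)) by lia.
  replace (d - j)%nat with (S (d - S j)) by lia.
  destruct (cf_splice_step x 2 Hx ltac:(lra) (d - S j) (0 + j)) as [-> ->].
  split; [reflexivity|].
  apply Rinv_neq_0_compat, Rgt_not_eq, (Rlt_trans _ 1); [lra|].
  apply (cf_splice_gt_1 x 2 Hx); [lra|lia].
Qed.

Lemma cf_approx_cquot_last (x : R) (d : nat) : cf_infinite x -> cquot d (cf_approx x d) = 2.
Proof.
  intros Hx. unfold cf_approx. rewrite (cquot_cf_splice x 2 Hx ltac:(lra)) by lia.
  rewrite Nat.sub_diag. reflexivity.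
Qed.

Lemma cf_approx_digit (x : R) (d j : nat) : cf_infinite x -> (j < d)%nat ->
  cf_digit j (cf_approx x d) = cf_digit j x.
Proof.
  intros Hx Hj. rewrite (cf_digit_Some j x (fun i _ => Hx i)).
  rewrite cf_digit_Some by (intros i Hi; apply (cf_approx_cquot_lt x d i Hx); lia).
  f_equal. apply (cf_approx_cquot_lt x d j Hx Hj).
Qed.

Lemma cf_approx_r_ge (x : R) (m d : nat) : cf_infinite x -> (m <= d)%nat -> r_ge m (cf_approx x d).
Proof.
  intros Hx Hm. apply r_ge_intro. intros i Hi. apply (cf_approx_cquot_lt x d i Hx). lia.
Qed.

Lemma two_le_ln_bound (j : nat) : (3 <= j)%nat -> 2 <= INR j * ln (INR j) ^ 2.
Proof.
  intros Hj. apply le_INR in Hj. replace (INR 3) with 3 in Hj by (simpl; ring).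
  assert (Hln : 1 <= ln (INR j)).
  { rewrite <- (ln_exp 1). apply ln_le; [apply exp_pos|]. pose proof exp_le_3. lra. }
  nra.
Qed.

Lemma cf_approx_in_T (B x : R) (d : nat) : cf_infinite x -> (3 <= d)%nat ->
  in_T B x -> in_T B (cf_approx x d).
Proof.
  intros Hx Hd HT j b Hj Hb. unfold cf_digit in Hb.
  destruct (cf_quot j (cf_approx x d)) as [w|] eqn:E; [|discriminate].
  injection Hb as <-. apply cf_quot_Some_inv in E as [-> Hpre].
  destruct (Compare_dec.lt_eq_lt_dec j d) as [[Hlt | ->] | Hgt].
  - rewrite (proj1 (cf_approx_cquot_lt x d j Hx Hlt)).
    apply (HT j _ Hj). apply cf_digit_Some. intros i _. apply Hx.
  - rewrite cf_approx_cquot_last, (proj1 (Int_part_IZR 2)) by exact Hx.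
    eapply Rle_trans; [apply two_le_ln_bound, Hd|apply Rmax_r].
  - exfalso. apply (Hpre d Hgt). rewrite cf_approx_cquot_last by exact Hx.
    exact (proj2 (Int_part_IZR 2)).
Qed.

Lemma is_rational_Q2R (q : Q) : is_rational (Q2R q).
Proof. exists (Q2Qc q). apply Qeq_eqR, Qred_correct. Qed.

Lemma is_rational_IZR (a : Z) : is_rational (IZR a).
Proof.
  replace (IZR a) with (Q2R (inject_Z a)) by (unfold Q2R; simpl; field).
  apply is_rational_Q2R.
Qed.

Lemma is_rational_IZR_add_inv (a : Z) (y : R) : is_rational y -> is_rational (IZR a + / y).
Proof.
  intros [q <-]. unfold Qc2R. destruct (Qeq_dec (this q) 0) as [Hq|Hq].
  - rewrite (Qeq_eqR _ _ Hq). replace (Q2R 0) with 0 by (unfold Q2R; simpl; field).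
    rewrite Rinv_0, Rplus_0_r. apply is_rational_IZR.
  - replace (IZR a + / Q2R (this q)) with (Q2R (inject_Z a + / this q)).
    + apply is_rational_Q2R.
    + rewrite Q2R_plus, Q2R_inv by exact Hq. f_equal. unfold Q2R; simpl; field.
Qed.

Lemma is_rational_of_cquot (k : nat) (x : R) : is_rational (cquot k x) -> is_rational x.
Proof.
  revert x. induction k as [|k IH]; intros x Hk; [exact Hk|].
  rewrite (Rplus_Int_part_frac_part x), <- (Rinv_inv (frac_part x)).
  apply is_rational_IZR_add_inv, IH, Hk.
Qed.

Lemma irrational_cf_infinite (x : R) : ~ is_rational x -> cf_infinite x.
Proof.
  intros Hx k Hk. apply Hx, (is_rational_of_cquot k).
  rewrite (Rplus_Int_part_frac_part (cquot k x)), Hk, Rplus_0_r. apply is_rational_IZR.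
Qed.

Lemma cf_approx_rational (x : R) (d : nat) : is_rational (cf_approx x d).
Proof.
  unfold cf_approx. generalize O. induction d as [|d IH]; intros k.
  - apply is_rational_IZR.
  - apply is_rational_IZR_add_inv, IH.
Qed.

Lemma Qc2R_inj (q1 q2 : Qc) : Qc2R q1 = Qc2R q2 -> q1 = q2.
Proof. intros H. apply Qc_is_canon, eqR_Qeq, H. Qed.

Definition cf_approx_q (x : R) (d : nat) : Qc :=
  epsilon (inhabits 0%Qc) (fun q => Qc2R q = cf_approx x d).

Lemma Qc2R_cf_approx_q (x : R) (d : nat) : Qc2R (cf_approx_q x d) = cf_approx x d.
Proof.
  apply (epsilon_spec (inhabits 0%Qc) (fun q => Qc2R q = cf_approx x d)), cf_approx_rational.
Qed.

Lemma in_T_mono (B B' x : R) : B <= B' -> in_T B x -> in_T B' x.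
Proof.
  intros HB H j b Hj Hb. eapply Rle_trans; [exact (H j b Hj Hb)|].
  apply Rmax_lub; [eapply Rle_trans; [exact HB|apply Rmax_l]|apply Rmax_r].
Qed.

Lemma in_V_mono (B B' : R) (m : nat) (x y : R) : B <= B' -> in_V B m x y -> in_V B' m x y.
Proof. intros HB [HT HV]. split; [exact (in_T_mono B B' y HB HT)|exact HV]. Qed.

Lemma in_V_recenter (B : R) (m : nat) (x x' y : R) :
  (forall j, (j <= m)%nat -> cf_digit j x = cf_digit j x') -> in_V B m x y -> in_V B m x' y.
Proof.
  intros Hxx' [HT [Hr Hd]]. split; [exact HT|split; [exact Hr|]].
  intros j Hj. rewrite Hd, Hxx' by exact Hj. reflexivity.
Qed.

Lemma cf_approx_q_in_V (B : R) (m : nat) (x : R) (d : nat) : cf_infinite x -> in_T B x ->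
  (3 <= d)%nat -> (m < d)%nat -> in_V B m x (Qc2R (cf_approx_q x d)).
Proof.
  intros Hx HT H3 Hm. rewrite Qc2R_cf_approx_q. split; [apply cf_approx_in_T; assumption|].
  split; [apply cf_approx_r_ge; [exact Hx|lia]|].
  intros j Hj. apply cf_approx_digit; [exact Hx|lia].
Qed.

Lemma Cmod_sub_triangle (a b c : C) : Cmod (a - c)%C <= Cmod (a - b)%C + Cmod (b - c)%C.
Proof. replace (a - c)%C with ((a - b) + (b - c))%C by ring. apply Cmod_triangle. Qed.

Lemma Cmod_sub_sym (a b : C) : Cmod (a - b)%C = Cmod (b - a)%C.
Proof. replace (a - b)%C with (- (b - a))%C by ring. apply Cmod_opp. Qed.

Lemma Cmod_le_Re_Im (z : C) : Cmod z <= Rabs (Re z) + Rabs (Im z).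
Proof.
  destruct z as [a b]. unfold Cmod; simpl.
  pose proof (Rabs_pos a); pose proof (Rabs_pos b); pose proof (pow2_abs a); pose proof (pow2_abs b).
  rewrite <- (sqrt_pow2 (Rabs a + Rabs b)) by lra.
  apply sqrt_le_1_alt. nra.
Qed.

Lemma im_le_Cmod (z : C) : Rabs (Im z) <= Cmod z.
Proof. exact (Rle_trans _ _ _ (Rmax_r _ _) (Rmax_Cmod z)). Qed.

Definition is_lim_Cseq (u : nat -> C) (L : C) : Prop :=
  forall eps, 0 < eps -> exists N, forall n, (N <= n)%nat -> Cmod (u n - L)%C < eps.

Lemma Cseq_cauchy_lim (u : nat -> C) :
  (forall eps, 0 < eps -> exists N, forall n k, (N <= n)%nat -> (N <= k)%nat ->
     Cmod (u n - u k)%C <= eps) ->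
  exists L, is_lim_Cseq u L.
Proof.
  intros Hu.
  assert (Hpart : forall p : C -> R, (forall z, Rabs (p z) <= Cmod z) ->
      (forall a b, p (a - b)%C = p a - p b) -> {l | Un_cv (fun n => p (u n)) l}).
  { intros p Hp Hsub. apply Rcomplete.R_complete. intros eps He.
    destruct (Hu (eps / 2)) as [N HN]; [lra|]. exists N. intros n k Hn Hk.
    unfold R_dist. rewrite <- Hsub.
    eapply Rle_lt_trans; [apply Hp|]. eapply Rle_lt_trans; [apply HN; assumption|lra]. }
  destruct (Hpart Re re_le_Cmod (fun a b => eq_refl)) as [lr Hr].
  destruct (Hpart Im im_le_Cmod (fun a b => eq_refl)) as [li Hi].
  exists (lr, li). intros eps He.
  destruct (Hr (eps / 2)) as [N1 H1]; [lra|]. destruct (Hi (eps / 2)) as [N2 H2]; [lra|].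
  exists (max N1 N2). intros n Hn.
  specialize (H1 n ltac:(lia)). specialize (H2 n ltac:(lia)). unfold R_dist in H1, H2.
  eapply Rle_lt_trans; [apply Cmod_le_Re_Im|].
  change (Rabs (Re (u n) - lr) + Rabs (Im (u n) - li) < eps). lra.
Qed.

Lemma exists_large_nat_Rpower (lam B : R) (M : nat) : 1 <= lam ->
  exists m : nat, (M <= m)%nat /\ (1 <= m)%nat /\ B <= Rpower (INR m) lam.
Proof.
  intros Hl. destruct (INR_unbounded B) as [n Hn].
  exists (max (max M 1) n). split; [lia|split; [lia|]].
  assert (H1 : 1 <= INR (max (max M 1) n)) by (apply (le_INR 1); lia).
  assert (Hn' : INR n <= INR (max (max M 1) n)) by (apply le_INR; lia).
  rewrite <- (Rpower_1 (INR (max (max M 1) n))) in Hn' by lra.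
  pose proof (Rle_Rpower (INR (max (max M 1) n)) 1 lam H1 Hl). lra.
Qed.

Lemma Rpower_inv_le (lam B : R) (m : nat) : 0 < lam -> 0 < B ->
  Rpower B (/ lam) <= INR m -> B <= Rpower (INR m) lam.
Proof.
  intros Hl HB H. rewrite <- (Rpower_1 B) at 1 by exact HB.
  replace 1 with (/ lam * lam) by (field; lra). rewrite <- Rpower_mult.
  apply Rle_Rpower_l; [lra|]. split; [apply exp_pos|exact H].
Qed.

(* For irrational x outside S the approximating sequence need not converge; the value is then arbitrary. *)
Definition cf_extension (f : Qc -> C) (x : R) : C :=
  epsilon (inhabits (RtoC 0)) (fun L =>
    (exists q, Qc2R q = x /\ L = f q) \/
    (~ is_rational x /\ is_lim_Cseq (fun d => f (cf_approx_q x d)) L)).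

Lemma cf_extension_Qc (f : Qc -> C) (q : Qc) : cf_extension f (Qc2R q) = f q.
Proof.
  unfold cf_extension.
  destruct (epsilon_spec (inhabits (RtoC 0)) (fun L =>
    (exists q', Qc2R q' = Qc2R q /\ L = f q') \/
    (~ is_rational (Qc2R q) /\ is_lim_Cseq (fun d => f (cf_approx_q (Qc2R q) d)) L)))
    as [[q' [Hq' ->]]|[Hq _]].
  - exists (f q). left. exists q. split; reflexivity.
  - f_equal. apply Qc2R_inj, Hq'.
  - exfalso. apply Hq. exists q. reflexivity.
Qed.

Section Extension.

Variables (lam : R) (f : Qc -> C).
Hypothesis lam_gt_1 : 1 < lam.
Hypothesis f_S : prop_S lam f.

Lemma prop_S_below (eps : R) : 0 < eps -> exists M : nat,
  forall (m : nat) (B x : R) (q1 q2 : Qc),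
  (M <= m)%nat -> (1 <= m)%nat -> B <= Rpower (INR m) lam -> in_T B x ->
  in_V B m x (Qc2R q1) -> in_V B m x (Qc2R q2) -> Cmod (f q1 - f q2)%C <= eps.
Proof.
  intros He. destruct (f_S eps He) as [M HM]. exists M.
  intros m B x q1 q2 HMm Hm HB Hx V1 V2.
  apply (HM m HMm Hm x (in_T_mono _ _ _ HB Hx)); apply (in_V_mono B); assumption.
Qed.

Lemma cf_approx_q_cauchy (B x : R) : cf_infinite x -> in_T B x ->
  exists L, is_lim_Cseq (fun d => f (cf_approx_q x d)) L.
Proof.
  intros Hx HT. apply Cseq_cauchy_lim. intros eps He.
  destruct (prop_S_below eps He) as [M HM].
  destruct (exists_large_nat_Rpower lam B M) as [m [HMm [Hm HB]]]; [lra|].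
  exists (max 3 (S m)). intros n k Hn Hk.
  apply (HM m B x); try assumption; apply cf_approx_q_in_V; (assumption || lia).
Qed.

Lemma cf_extension_lim (B x : R) : ~ is_rational x -> in_T B x ->
  is_lim_Cseq (fun d => f (cf_approx_q x d)) (cf_extension f x).
Proof.
  intros Hx HT. unfold cf_extension.
  destruct (epsilon_spec (inhabits (RtoC 0)) (fun L =>
    (exists q, Qc2R q = x /\ L = f q) \/
    (~ is_rational x /\ is_lim_Cseq (fun d => f (cf_approx_q x d)) L)))
    as [[q [Hq _]]|[_ HL]].
  - destruct (cf_approx_q_cauchy B x (irrational_cf_infinite x Hx) HT) as [L HL].
    exists L. right. split; assumption.
  - exfalso. apply Hx. exists q. exact Hq.
  - exact HL.
Qed.

Lemma cf_extension_approx (B : R) (m : nat) (x : R) : in_T B x -> r_ge m x ->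
  forall delta, 0 < delta ->
  exists q : Qc, Cmod (cf_extension f x - f q)%C < delta /\ in_V B m x (Qc2R q).
Proof.
  intros HT Hr delta Hd. destruct (classic (is_rational x)) as [[q <-]|Hx].
  - exists q. rewrite cf_extension_Qc.
    replace (f q - f q)%C with (RtoC 0) by ring. rewrite Cmod_0.
    split; [exact Hd|]. split; [exact HT|split; [exact Hr|intros j _; reflexivity]].
  - destruct (cf_extension_lim B x Hx HT delta Hd) as [N HN].
    exists (cf_approx_q x (max N (max 3 (S m)))). split.
    + rewrite Cmod_sub_sym. apply HN. lia.
    + apply cf_approx_q_in_V; [apply irrational_cf_infinite, Hx|exact HT|lia|lia].
Qed.

Lemma cf_extension_cf_limit (B x : R) : in_T B x -> ~ is_rational x ->
  cf_limit B f x (cf_extension f x).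
Proof.
  intros HT Hx eps He. pose proof (irrational_cf_infinite x Hx) as Hinf.
  destruct (prop_S_below (eps / 2)) as [M HM]; [lra|].
  destruct (exists_large_nat_Rpower lam B M) as [m [HMm [Hm HB]]]; [lra|].
  destruct (cf_extension_approx B m x HT (r_ge_intro m x (fun i _ => Hinf i)) (eps / 2))
    as [q' [Hq' Vq']]; [lra|].
  destruct (locally_R_delta _ _ (locally_cf_prefix m x Hinf)) as [delta [Hdelta Hnear]].
  exists delta. split; [exact Hdelta|]. intros q Tq [_ Hq].
  destruct (Hnear _ Hq) as [Rq Dq].
  pose proof (HM m B x q q' HMm Hm HB HT (conj Tq (conj Rq Dq)) Vq').
  pose proof (Cmod_sub_triangle (f q) (f q') (cf_extension f x)).
  rewrite (Cmod_sub_sym (f q')) in *. lra.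
Qed.

Lemma cf_extension_uniform (eps : R) : 0 < eps -> exists M : nat,
  forall (m : nat) (B x x' : R),
  (M <= m)%nat -> (1 <= m)%nat -> 0 < B -> Rpower B (/ lam) <= INR m ->
  in_T B x -> in_T B x' -> r_ge m x -> r_ge m x' ->
  (forall j, (j <= m)%nat -> cf_digit j x = cf_digit j x') ->
  Cmod (cf_extension f x - cf_extension f x')%C <= eps.
Proof.
  intros He. destruct (prop_S_below eps He) as [M HM]. exists M.
  intros m B x x' HMm Hm HB HBm Tx Tx' Rx Rx' Dxx'.
  apply Rle_plus_epsilon. intros delta Hd.
  destruct (cf_extension_approx B m x Tx Rx (delta / 2)) as [q [Hq Vq]]; [lra|].
  destruct (cf_extension_approx B m x' Tx' Rx' (delta / 2)) as [q' [Hq' Vq']]; [lra|].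
  assert (Hqq' : Cmod (f q - f q')%C <= eps).
  { apply (HM m B x); try assumption.
    - apply Rpower_inv_le; [lra|assumption|assumption].
    - apply (in_V_recenter B m x'); [|exact Vq']. intros j Hj. symmetry. apply Dxx', Hj. }
  pose proof (Cmod_sub_triangle (cf_extension f x) (f q) (cf_extension f x')).
  pose proof (Cmod_sub_triangle (f q) (f q') (cf_extension f x')).
  rewrite (Cmod_sub_sym (f q')) in *. lra.
Qed.

End Extension.

Theorem proposition2p2 (lam : R) (f : Qc -> C) :
  1 < lam -> prop_S lam f ->
  exists fstar : R -> C,
    (* f^* = f on Q *)
    (forall q : Qc, fstar (Qc2R q) = f q) /\
    (* for x in S \ Q and every B > 0 with x in T(B) \ Q, f^*(x) is the limit *)
    (forall (x B : R), 0 < B -> in_T B x -> ~ is_rational x -> cf_limit B f x (fstar x)) /\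
    (* uniform o(1) estimate, rate independent of B *)
    (forall eps, 0 < eps -> exists M : nat, forall (m : nat) (B x x' : R),
       (M <= m)%nat -> (1 <= m)%nat -> 0 < B -> Rpower B (/ lam) <= INR m ->
       in_T B x -> in_T B x' -> r_ge m x -> r_ge m x' ->
       (forall j, (j <= m)%nat -> cf_digit j x = cf_digit j x') ->
       Cmod (Cminus (fstar x) (fstar x')) <= eps).
Proof.
  intros Hlam HS. exists (cf_extension f).
  split; [exact (cf_extension_Qc f)|split].
  - intros x B _ HT Hx. exact (cf_extension_cf_limit lam f Hlam HS B x HT Hx).
  - exact (cf_extension_uniform lam f Hlam HS).
Qed.
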